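(* Let $n\ge0$ and let $f$ be a stable real-rational all-pass function of order $n$ with unit gain ($|f(e^{j\omega})|=1$ for all $\omega$) all of whose poles are real (no poles if $n=0$). Then for every $\omega_p\in(-\pi,\pi)\setminus\{0\}$, $$\theta_f'(\omega_p)\le-\left|\frac{\sin(\theta_f(\omega_p))}{\sin\omega_p}\right|,$$ and equality holds for all such $\omega_p$ when $n=0$ or $n=1$.
   Context: Stable means all poles in the open unit disk. $\theta_f(\omega):=\angle f(e^{j\omega})$ is a continuous choice of argument and $\theta_f'(\omega)$ its derivative with respect to $\omega$ (the quantity $\sin\theta_f(\omega_p)$ is independent of the branch). *)

From HB Require Import structures.
From mathcomp Require Import all_boot all_order all_algebra.
From mathcomp Require Import all_classical all_reals all_analysis.
From mathcomp Require Import complex.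
Set Implicit Arguments. Unset Strict Implicit. Unset Printing Implicit Defensive.
Import Order.TTheory GRing.Theory Num.Theory.
Import numFieldNormedType.Exports.
Local Open Scope ring_scope.

(* A real-rational function f = p / q is represented by a pair of real
   polynomials p, q : {poly R}.  Its complex extension lifts the coefficients
   into R[i]. *)

Definition expj (R : realType) (w : R) : R[i] := Complex (cos w) (sin w).

Definition rat_eval (R : realType) (p q : {poly R}) (z : R[i]) : R[i] :=
  (map_poly (real_complex R) p).[z] / (map_poly (real_complex R) q).[z].

(* complex poles of f = p/q (p, q coprime): the complex roots of q *)
Definition is_pole (R : realType) (p q : {poly R}) (z : R[i]) : Prop :=
  root (map_poly (real_complex R) q) z.

(* order (McMillan degree) of p/q, for coprime p, q *)
Definition rat_order (R : realType) (p q : {poly R}) : nat :=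
  maxn (size p).-1 (size q).-1.

Definition real_rational (R : realType) (p q : {poly R}) : Prop :=
  q != 0 /\ coprimep p q.

(* stable: all poles (finite ones, and no pole at infinity, i.e. proper)
   lie in the open unit disk *)
Definition stable (R : realType) (p q : {poly R}) : Prop :=
  (size p <= size q)%N /\ forall z : R[i], is_pole p q z -> Normc.normc z < 1.

Definition unit_allpass (R : realType) (p q : {poly R}) : Prop :=
  forall w : R, Normc.normc (rat_eval p q (expj w)) = 1.

Definition real_poles (R : realType) (p q : {poly R}) : Prop :=
  forall z : R[i], is_pole p q z -> Im z = 0.

Definition cont_arg (R : realType) (p q : {poly R}) (theta : R -> R) : Prop :=
  continuous theta /\ forall w : R, rat_eval p q (expj w) = expj (theta w).

(* On the unit circle f = p/q is, up to a sign, a product of Blaschke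
   factors e^{jw} conj(e^{jw} - a) / (e^{jw} - a) over the poles a in (-1, 1):
   |p| = |q| on the circle gives p * rec p = q * rec q for the reciprocal
   polynomials (rec P)(z) = z^N P(1/z), and coprimality forces rec p to be a
   multiple of q.  The factor for a has the continuous argument
   phi_a(w) = -w - 2 atan (a sin w / (1 - a cos w)), whose derivative
   phi_a' = -(1 - a^2) / |e^{jw} - a|^2 is negative and satisfies
   sin phi_a = phi_a' sin w.  Any continuous argument theta of f differs
   locally from sum_a phi_a by a constant, so
   |sin theta| = |sin (sum phi_a)| <= sum |sin phi_a| = - theta' |sin w|,
   with equality when there is at most one factor. *)

From HB Require Import structures.
From mathcomp Require Import all_boot all_order all_algebra.
From mathcomp Require Import all_classical all_reals all_analysis.
From mathcomp Require Import complex.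
From mathcomp Require Import ring lra.

Import Order.TTheory GRing.Theory Num.Theory.
Import numFieldNormedType.Exports.
Local Open Scope ring_scope.
Local Open Scope complex_scope.

Section ComplexComponents.
Context {R : realType}.
Implicit Types (x y : R[i]) (w : R).

Lemma ReM x y :
  complex.Re (x * y) = complex.Re x * complex.Re y - complex.Im x * complex.Im y.
Proof. by case: x => a b; case: y => c d. Qed.

Lemma ImM x y :
  complex.Im (x * y) = complex.Re x * complex.Im y + complex.Im x * complex.Re y.
Proof. by case: x => a b; case: y => c d. Qed.

Lemma complex_ext x y :
  complex.Re x = complex.Re y -> complex.Im x = complex.Im y -> x = y.
Proof. by case: x => a b; case: y => c d /= -> ->. Qed.

Lemma complex_Im_eq0 x : Num.Theory.Im x = 0 -> complex.Im x = 0.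
Proof.
move/Creal_ImP; rewrite realE; case: x => a b /=.
by rewrite /Order.le /=; case/orP => /andP[/eqP -> _].
Qed.

Lemma normc_real (a : R) : Normc.normc a%:C = `|a|.
Proof. by rewrite /Normc.normc /= expr0n /= addr0 sqrtr_sqr. Qed.

Lemma normcX x n : Normc.normc (x ^+ n) = Normc.normc x ^+ n.
Proof. by elim: n => [|n IH]; rewrite ?Normc.normc1 // !exprS Normc.normcM IH. Qed.

Lemma normc_conjc x : Normc.normc (conjc x) = Normc.normc x.
Proof. by case: x => a b; rewrite /Normc.normc /= sqrrN. Qed.

Lemma mulc_conjc x : x * conjc x = (Normc.normc x ^+ 2)%:C.
Proof.
case: x => a b; apply: complex_ext; rewrite ?ReM ?ImM /=; last by ring.
by rewrite sqr_sqrtr ?addr_ge0 ?sqr_ge0 //; ring.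
Qed.

(* Restatements of the morphism laws of [conjc] keeping [conjc] as head symbol,
   so that rewriting can continue on the result. *)
Lemma conjcC (k : R) : conjc k%:C = k%:C.
Proof. by apply: complex_ext; rewrite /= ?oppr0. Qed.

Lemma conjcM x y : conjc (x * y) = conjc x * conjc y. Proof. exact: rmorphM. Qed.

Lemma conjcB x y : conjc (x - y) = conjc x - conjc y. Proof. exact: rmorphB. Qed.

Lemma conjcX x n : conjc (x ^+ n) = conjc x ^+ n. Proof. exact: rmorphXn. Qed.

Lemma conjc_sum (I : Type) (r : seq I) (F : I -> R[i]) :
  conjc (\sum_(i <- r) F i) = \sum_(i <- r) conjc (F i).
Proof. exact: rmorph_sum. Qed.

Lemma conjc_prod (I : Type) (r : seq I) (F : I -> R[i]) :
  conjc (\prod_(i <- r) F i) = \prod_(i <- r) conjc (F i).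
Proof. exact: rmorph_prod. Qed.

Lemma expjD w1 w2 : expj (w1 + w2) = expj w1 * expj w2.
Proof. by apply: complex_ext; rewrite ?ReM ?ImM /= ?cosD ?sinD //; ring. Qed.

Lemma expjN w : expj (- w) = conjc (expj w).
Proof. by rewrite /expj cosN sinN. Qed.

Lemma expj0 : expj (0 : R) = 1.
Proof. by rewrite /expj cos0 sin0. Qed.

Lemma expj_pi : expj (pi : R) = -1.
Proof. by rewrite /expj cospi sinpi; apply: complex_ext; rewrite /= ?oppr0. Qed.

Lemma normc_expj w : Normc.normc (expj w) = 1.
Proof. by rewrite /Normc.normc /expj cos2Dsin2 sqrtr1. Qed.

Lemma expj_neq0 w : expj w != 0.
Proof.
apply/eqP => z0; have := normc_expj w.
by rewrite z0 Normc.normc0 => /eqP; rewrite eq_sym oner_eq0.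
Qed.

Lemma expj_conjc w : expj w * conjc (expj w) = 1.
Proof. by rewrite mulc_conjc normc_expj expr1n. Qed.

End ComplexComponents.

Section BlaschkeFactor.
Context {R : realType}.
Implicit Types (a w : R).

Definition blaschke_arg a w := - w - 2 * atan (a * sin w / (1 - a * cos w)).

Definition blaschke_arg_deriv a w := - (1 - a ^+ 2) / (1 - 2 * a * cos w + a ^+ 2).

Lemma blaschke_den_gt0 a w : -1 < a < 1 -> 0 < 1 - a * cos w.
Proof.
move=> ha; rewrite subr_gt0; apply: le_lt_trans (ler_norm _) _.
rewrite normrM; apply: le_lt_trans (_ : _ <= `|a|) _.
  by rewrite -[leRHS]mulr1 ler_wpM2l ?cos_max.
by rewrite ltr_norml.
Qed.

(* [1 - 2 a cos w + a^2 = |e^{jw} - a|^2] *)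
Lemma blaschke_sqnorm a w :
  1 - 2 * a * cos w + a ^+ 2 = (1 - a * cos w) ^+ 2 + (a * sin w) ^+ 2.
Proof. by rewrite exprMn sin2cos2; ring. Qed.

Lemma blaschke_sqnorm_gt0 a w : -1 < a < 1 -> 0 < 1 - 2 * a * cos w + a ^+ 2.
Proof.
move=> ha; rewrite blaschke_sqnorm ltr_pwDl ?sqr_ge0 //.
by rewrite exprn_gt0 // blaschke_den_gt0.
Qed.

Lemma is_derive_blaschke_arg a w : -1 < a < 1 ->
  is_derive w 1 (blaschke_arg a) (blaschke_arg_deriv a w).
Proof.
move=> ha; have d0 := blaschke_den_gt0 a w ha.
have e0 := blaschke_sqnorm_gt0 a w ha.
pose t x := a * sin x / (1 - a * cos x).
have dden : is_derive w 1 (fun w => 1 - a * cos w) (a * sin w).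
  by apply: is_derive_eq; rewrite /GRing.scale /=; lra.
have dnum : is_derive w 1 (fun w => a * sin w) (a * cos w).
  by apply: is_derive_eq; rewrite /GRing.scale /=.
have dt := is_deriveM dnum
  (@is_deriveV _ (fun w => 1 - a * cos w) w _ _ (lt0r_neq0 d0) dden).
have datan := is_derive1_comp (is_derive1_atan (t w)) dt.
have darg := is_deriveB (is_deriveNid w 1) (is_deriveZ 2 datan).
rewrite /blaschke_arg; apply: (is_derive_eq darg).
rewrite /GRing.scale /= /blaschke_arg_deriv /t.
have -> : 1 - a ^+ 2 = 1 - a ^+ 2 * (cos w ^+ 2 + sin w ^+ 2) by rewrite cos2Dsin2 mulr1.
rewrite blaschke_sqnorm; field.
by rewrite -blaschke_sqnorm !lt0r_neq0.
Qed.

Lemma expj_subr_neq0 a w : -1 < a < 1 -> expj w - a%:C != 0.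
Proof.
rewrite -ltr_norml subr_eq0 => ha; apply/eqP => /(congr1 (@Normc.normc R)).
by rewrite normc_expj normc_real => a1; rewrite -a1 ltxx in ha.
Qed.

Lemma expj_blaschke_arg a w : -1 < a < 1 ->
  expj (blaschke_arg a w) = expj w * conjc (expj w - a%:C) / (expj w - a%:C).
Proof.
move=> ha; have d0 := blaschke_den_gt0 a w ha.
set z := expj w; have zc : z * conjc z = 1 := expj_conjc w.
pose al := atan (a * sin w / (1 - a * cos w)).
pose v : R[i] := 1 - a%:C * conjc z.
pose m := cos al / (1 - a * cos w).
have zv : z - a%:C = z * v by rewrite mulrBr mulr1 mulrCA zc mulr1.
have v0 : v != 0.
  by apply/eqP => v0; move: (expj_subr_neq0 a w ha); rewrite zv v0 mulr0 eqxx.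
have cal : 0 < cos al by apply: cos_gt0_pihalf; rewrite atan_gtNpi2 atan_ltpi2.
have sal : sin al = a * sin w / (1 - a * cos w) * cos al.
  by rewrite -[X in X * _](atanK (a * sin w / _)) /tan divfK ?lt0r_neq0.
(* [e^{j al}] is a positive multiple of [1 + j tan al = v / (1 - a cos w)]. *)
have hal : expj al = m%:C * v.
  apply: complex_ext; rewrite ?ReM ?ImM /= ?sal /m; field; exact: lt0r_neq0.
have mv : m%:C * (m%:C * conjc v) = v^-1.
  apply: (mulfI v0); rewrite divff //.
  by rewrite -(expj_conjc al) hal conjcM conjcC [m%:C * v]mulrC -mulrA.
have -> : blaschke_arg a w = - w + - al + - al.
  by rewrite /blaschke_arg -/al mulr_natl mulr2n opprD addrA.
rewrite !expjD !expjN hal conjcM conjcC -/z zv conjcM.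
transitivity (conjc z * conjc v * (m%:C * (m%:C * conjc v))); first by ring.
by rewrite mv; field; rewrite v0 expj_neq0.
Qed.

Lemma sin_blaschke_arg a w : -1 < a < 1 ->
  sin (blaschke_arg a w) = blaschke_arg_deriv a w * sin w.
Proof.
move=> ha; have e0 := blaschke_sqnorm_gt0 a w ha.
set z := expj w; have zc : z * conjc z = 1 := expj_conjc w.
set E := 1 - 2 * a * cos w + a ^+ 2.
have hE : (z - a%:C) * conjc (z - a%:C) = E%:C.
  apply: complex_ext; rewrite ?ReM ?ImM /= /E; have := cos2Dsin2 w; lra.
have key : expj (blaschke_arg a w) * E%:C = conjc z - (2 * a)%:C + (a ^+ 2)%:C * z.
  rewrite expj_blaschke_arg // -hE mulrA divfK ?expj_subr_neq0 // conjcB conjcC.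
  transitivity ((z * conjc z) * conjc z - (2 * a)%:C * (z * conjc z) + (a ^+ 2)%:C * z).
    by rewrite -/z; ring.
  by rewrite zc; ring.
have hsin : sin (blaschke_arg a w) * E = - (1 - a ^+ 2) * sin w.
  by move: (congr1 (@complex.Im R) key); rewrite /E raddfD raddfB !ImM /=; lra.
by rewrite /blaschke_arg_deriv -/E mulrAC -hsin mulfK ?lt0r_neq0.
Qed.

End BlaschkeFactor.

Section SineOfSums.
Context {R : realType}.

Lemma normr_sin_sum_le (I : Type) (r : seq I) (f : I -> R) :
  `|sin (\sum_(i <- r) f i)| <= \sum_(i <- r) `|sin (f i)|.
Proof.
elim: r => [|i r IH]; first by rewrite !big_nil sin0 normr0.
rewrite !big_cons sinD; apply: le_trans (ler_normD _ _) _.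
rewrite !normrM; apply: lerD; first by rewrite -[leRHS]mulr1 ler_wpM2l ?cos_max.
by apply: le_trans IH; rewrite -[leRHS]mul1r ler_wpM2r ?cos_max.
Qed.

Lemma normr_sin_sum_small (I : Type) (r : seq I) (f : I -> R) : (size r <= 1)%N ->
  `|sin (\sum_(i <- r) f i)| = \sum_(i <- r) `|sin (f i)|.
Proof. by case: r => [|i [|]] // _; rewrite ?big_nil ?big_seq1 ?sin0 ?normr0. Qed.

Lemma normr_sin_addpi (e x : R) : e = 0 \/ e = pi -> `|sin (e + x)| = `|sin x|.
Proof. by case=> ->; rewrite ?add0r // addrC sinDpi normrN. Qed.

Lemma sin_neq0_Npipi (x : R) : - pi < x < pi -> x != 0 -> sin x != 0.
Proof.
case/andP=> x_gt x_lt; case: ltgtP => // [x0|x0] _.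
  by rewrite -oppr_eq0 -sinN gt_eqF // sin_gt0_pi // oppr_gt0 x0 ltrNl.
by rewrite gt_eqF // sin_gt0_pi // x0.
Qed.

End SineOfSums.

Section AllpassArg.
Context {R : realType}.
Implicit Types (s : seq R) (e w : R).

Definition inside_unit_interval s := all (fun a => -1 < a < 1) s.

Definition allpass_arg e s w := e + \sum_(a <- s) blaschke_arg a w.

Definition allpass_arg_deriv s w := \sum_(a <- s) blaschke_arg_deriv a w.

Lemma expj_sum_blaschke_arg s w : inside_unit_interval s ->
  expj (\sum_(a <- s) blaschke_arg a w) =
  \prod_(a <- s) (expj w * conjc (expj w - a%:C) / (expj w - a%:C)).
Proof.
move=> /allP hs; rewrite (big_morph (@expj R) (@expjD R) expj0).
by apply: eq_big_seq => a /hs; apply: expj_blaschke_arg.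
Qed.

Lemma is_derive_sum_blaschke_arg s w : inside_unit_interval s ->
  is_derive w 1 (fun w => \sum_(a <- s) blaschke_arg a w) (allpass_arg_deriv s w).
Proof.
rewrite /allpass_arg_deriv; elim: s => [_|a s IH] /=; last case/andP=> ha hs.
  have -> : (fun w => \sum_(a <- [::]) blaschke_arg a w) = cst 0.
    by apply/funext => x; rewrite big_nil.
  by rewrite big_nil; apply: is_derive_cst.
have -> : (fun w => \sum_(b <- a :: s) blaschke_arg b w) =
          blaschke_arg a + (fun w => \sum_(b <- s) blaschke_arg b w).
  by apply/funext => x; rewrite big_cons.
by rewrite big_cons; apply: is_deriveD (is_derive_blaschke_arg a w ha) (IH hs).
Qed.

Lemma is_derive_allpass_arg e s w : inside_unit_interval s ->
  is_derive w 1 (allpass_arg e s) (allpass_arg_deriv s w).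
Proof.
move=> hs; have := is_deriveD (is_derive_cst e w 1) (is_derive_sum_blaschke_arg s w hs).
by rewrite add0r.
Qed.

Lemma blaschke_arg_deriv_le0 a w : -1 < a < 1 -> blaschke_arg_deriv a w <= 0.
Proof.
move=> ha; rewrite /blaschke_arg_deriv mulNr oppr_le0.
rewrite divr_ge0 ?ltW ?blaschke_sqnorm_gt0 //.
by case/andP: ha => a1 a2; nra.
Qed.

Lemma allpass_arg_deriv_normr_sin s w : inside_unit_interval s ->
  - allpass_arg_deriv s w * `|sin w| = \sum_(a <- s) `|sin (blaschke_arg a w)|.
Proof.
rewrite /allpass_arg_deriv mulNr mulr_suml -sumrN => /allP hs.
apply: eq_big_seq => a /hs ha.
by rewrite sin_blaschke_arg // normrM ler0_norm ?blaschke_arg_deriv_le0 ?mulNr.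
Qed.

Lemma allpass_arg_derivE s w : inside_unit_interval s -> sin w != 0 ->
  allpass_arg_deriv s w = - (\sum_(a <- s) `|sin (blaschke_arg a w)|) / `|sin w|.
Proof.
move=> hs sw0; rewrite -allpass_arg_deriv_normr_sin // mulNr opprK mulfK //.
by rewrite normr_eq0.
Qed.

Lemma allpass_arg_deriv_le e s w :
  inside_unit_interval s -> e = 0 \/ e = pi -> sin w != 0 ->
  allpass_arg_deriv s w <= - `|sin (allpass_arg e s w) / sin w|.
Proof.
move=> hs he sw0; rewrite allpass_arg_derivE // normrM normrV ?unitfE //.
by rewrite normr_sin_addpi // mulNr lerN2 ler_wpM2r ?invr_ge0 ?normr_sin_sum_le.
Qed.

Lemma allpass_arg_deriv_eq e s w :
  inside_unit_interval s -> e = 0 \/ e = pi -> sin w != 0 -> (size s <= 1)%N ->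
  allpass_arg_deriv s w = - `|sin (allpass_arg e s w) / sin w|.
Proof.
move=> hs he sw0 small; rewrite allpass_arg_derivE // normrM normrV ?unitfE //.
by rewrite normr_sin_addpi // normr_sin_sum_small // mulNr.
Qed.

End AllpassArg.

Section AllpassStructure.
Context {R : realType}.
Local Notation toC p := (map_poly (real_complex R) p).

Lemma real_poles_factor (p q : {poly R}) :
  real_rational p q -> real_poles p q -> stable p q ->
  exists s : seq R, [/\ inside_unit_interval s, size s = (size q).-1 &
    forall x, (toC q).[x] = (lead_coef q)%:C * \prod_(a <- s) (x - a%:C)].
Proof.
case=> q0 _ hreal [_ hdisk].
have lq0 : lead_coef (toC q) != 0 by rewrite lead_coef_eq0 map_poly_eq0.
have [r hr] := closed_field_poly_normal (toC q).
have pole_r z : z \in r -> is_pole p q z.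
  by move=> zr; rewrite /is_pole hr rootZ // root_prod_XsubC.
have real_r z : z \in r -> z = (complex.Re z)%:C.
  move=> zr; have := complex_Im_eq0 z (hreal z (pole_r z zr)).
  by case: z {zr} => a b /= ->.
exists (map (@complex.Re R) r); split.
- apply/allP => _ /mapP[z zr ->]; rewrite -ltr_norml -normc_real -real_r //.
  exact: hdisk (pole_r z zr).
- rewrite size_map -(size_map_poly (real_complex R) q) hr size_scale //.
  by rewrite size_prod_XsubC.
- move=> x; rewrite {1}hr hornerZ horner_prod lead_coef_map big_map.
  by congr (_ * _); apply: eq_big_seq => z zr; rewrite hornerXsubC -real_r.
Qed.

Definition reciprocal (N : nat) (P : {poly R}) := \poly_(i < N.+1) P`_(N - i).

Lemma reciprocal_neq0 N (P : {poly R}) :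
  (size P <= N.+1)%N -> P != 0 -> reciprocal N P != 0.
Proof.
move=> hs; apply: contra => /eqP h; apply/eqP/polyP => j; rewrite coef0.
case: (leqP j N) => hj.
  have := congr1 (fun P : {poly R} => P`_(N - j)) h.
  by rewrite /= coef_poly coef0 ltnS leq_subr subKn.
by rewrite nth_default // (leq_trans hs).
Qed.

Lemma horner_reciprocal N (P : {poly R}) (z : R[i]) :
  (size P <= N.+1)%N -> z * conjc z = 1 ->
  (toC (reciprocal N P)).[z] = z ^+ N * conjc (toC P).[z].
Proof.
move=> hP zc.
have h1 : (size (toC (reciprocal N P)) <= N.+1)%N by rewrite size_map_poly size_poly.
have h2 : (size (toC P) <= N.+1)%N by rewrite size_map_poly.
rewrite (horner_coef_wide _ h1) (horner_coef_wide _ h2) conjc_sum mulr_sumr.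
rewrite (reindex_inj rev_ord_inj) /=; apply: eq_bigr => i _.
have hi : (i <= N)%N by rewrite -ltnS.
rewrite !coef_map /= coef_poly /= subSS ltnS leq_subr subKn //.
rewrite conjcM conjcX conjcC mulrCA; congr (_ * _).
have -> : z ^+ N = z ^+ (N - i) * z ^+ i by rewrite -exprD subnK.
by rewrite -mulrA -exprMn zc expr1n mulr1.
Qed.

Lemma poly_eq0_on_circle (D : {poly R}) : (forall w : R, (toC D).[expj w] = 0) -> D = 0.
Proof.
move=> hD; apply/eqP; apply: contraT => D0.
have pi_k_in k : (pi / (k.+1)%:R : R) \in `[0, pi].
  rewrite in_itv /= divr_ge0 ?pi_ge0 //= ler_pdivrMr ?ltr0Sn //.
  by rewrite ler_pMr ?pi_gt0 // ler1n.
pose zs := [seq expj (pi / (k.+1)%:R : R) | k <- iota 0 (size (toC D))].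
have roots_zs : all (root (toC D)) zs.
  by apply/allP => _ /mapP[k _ ->]; rewrite /root hD.
have uniq_zs : uniq zs.
  rewrite map_inj_in_uniq ?iota_uniq // => k l _ _ /(congr1 (@complex.Re R)) /=.
  move=> /(cos_inj (pi_k_in k) (pi_k_in l)) /(mulfI (lt0r_neq0 (pi_gt0 R))).
  by move/invr_inj/eqP; rewrite eqr_nat => /eqP[].
have DC0 : toC D != 0 by rewrite map_poly_eq0.
have := max_poly_roots DC0 roots_zs uniq_zs.
by rewrite size_map size_iota ltnn.
Qed.

Lemma unit_allpass_normc (p q : {poly R}) w : unit_allpass p q ->
  (toC q).[expj w] != 0 /\ Normc.normc (toC p).[expj w] = Normc.normc (toC q).[expj w].
Proof.
move=> /(_ w); rewrite /rat_eval.
have [->|q0] := eqVneq (toC q).[expj w] 0.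
  by rewrite invr0 mulr0 Normc.normc0 => /eqP; rewrite eq_sym oner_eq0.
have nq0 : Normc.normc (toC q).[expj w] != 0.
  by apply: contra q0 => /eqP /Normc.eq0_normc ->.
rewrite Normc.normcM Normc.normcV => e; split=> //.
by rewrite -[LHS](divfK nq0) e mul1r.
Qed.

Lemma unit_allpass_reciprocal (p q : {poly R}) :
  q != 0 -> (size p <= size q)%N -> unit_allpass p q ->
  p * reciprocal (size q).-1 p = q * reciprocal (size q).-1 q.
Proof.
move=> q0 hs hap; apply/eqP; rewrite -subr_eq0; apply/eqP.
apply: poly_eq0_on_circle => w.
have sq : (size q).-1.+1 = size q by rewrite prednK // size_poly_gt0.
have [_ hn] := unit_allpass_normc p q w hap.
rewrite rmorphB !rmorphM /= hornerD hornerN !hornerM.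
rewrite !horner_reciprocal ?sq ?expj_conjc //.
by rewrite [X in X - _]mulrCA [X in _ - X]mulrCA !mulc_conjc hn subrr.
Qed.

(* Coprimality forces [q] to divide the reciprocal of [p], which has no larger size. *)
Lemma unit_allpass_eqp (p q : {poly R}) :
  real_rational p q -> stable p q -> unit_allpass p q ->
  q %= reciprocal (size q).-1 p.
Proof.
case=> q0 cop [hs _] hap.
have sq : (size q).-1.+1 = size q by rewrite prednK // size_poly_gt0.
have p0 : p != 0.
  apply/eqP => p0; have := hap 0.
  rewrite /rat_eval p0 rmorph0 horner0 mul0r Normc.normc0.
  by move/eqP; rewrite eq_sym oner_eq0.
have rp0 : reciprocal (size q).-1 p != 0.
  by apply: reciprocal_neq0 => //; rewrite sq.
have q_dvd : q %| reciprocal (size q).-1 p.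
  rewrite -(Gauss_dvdpr (reciprocal (size q).-1 p) (_ : coprimep q p)).
    by rewrite unit_allpass_reciprocal // dvdp_mulIl.
  by rewrite coprimep_sym.
rewrite -dvdp_size_eqp //; apply/eqP/anti_leq.
by rewrite (dvdp_leq rp0 q_dvd) -sq size_poly.
Qed.

Lemma unit_allpass_on_circle (p q : {poly R}) :
  real_rational p q -> stable p q -> unit_allpass p q ->
  exists2 e, e = 0 \/ e = pi & forall w,
    (toC p).[expj w] = expj e * expj w ^+ (size q).-1 * conjc (toC q).[expj w].
Proof.
move=> hrr hst hap; set N := (size q).-1.
have /eqpP[[c1 c2] /andP[c10 c20] /= hpq] := unit_allpass_eqp p q hrr hst hap.
have sp : (size p <= N.+1)%N.
  by case: hst => + _; rewrite /N prednK // size_poly_gt0; case: hrr.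
have c2C : c2%:C != 0 :> R[i] by rewrite fmorph_eq0.
pose k := c1 / c2.
have hk w : (toC p).[expj w] = k%:C * expj w ^+ N * conjc (toC q).[expj w].
  set z := expj w; have zc : z * conjc z = 1 := expj_conjc w; clearbody z.
  have := congr1 (fun P : {poly R} => conjc (toC P).[z]) hpq.
  rewrite /= !map_polyZ !hornerZ horner_reciprocal // !conjcM !conjcC conjcX conjcK.
  move=> hconj; apply: (mulfI c2C).
  transitivity (c2%:C * (conjc z ^+ N * (toC p).[z]) * z ^+ N).
    have zN : conjc z ^+ N * z ^+ N = 1 by rewrite -exprMn mulrC zc expr1n.
    by rewrite -[LHS]mulr1 -zN; ring.
  by rewrite -hconj /k fmorph_div; field.
have k_norm : `|k| = 1.
  have [q0 hn] := unit_allpass_normc p q 0 hap.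
  have nq0 : Normc.normc (toC q).[expj 0] != 0.
    by apply: contra q0 => /eqP /Normc.eq0_normc ->.
  move: hn; rewrite hk !Normc.normcM normcX normc_expj expr1n mulr1 normc_conjc.
  by rewrite normc_real -[X in _ = X]mul1r => /(mulIf nq0).
suff [e he ek] : exists2 e, e = 0 \/ e = pi & expj e = k%:C.
  by exists e => // w; rewrite ek hk.
have [k0|k0] := lerP 0 k.
- have -> : k = 1 by rewrite -k_norm ger0_norm.
  by exists 0; [left | rewrite expj0 rmorph1].
- have -> : k = -1 by rewrite -k_norm ltr0_norm // opprK.
  by exists pi; [right | rewrite expj_pi rmorphN1].
Qed.

Lemma unit_allpass_arg (p q : {poly R}) :
  real_rational p q -> stable p q -> unit_allpass p q -> real_poles p q ->
  exists e s, [/\ e = 0 \/ e = pi, inside_unit_interval s, size s = (size q).-1 &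
    forall w, rat_eval p q (expj w) = expj (allpass_arg e s w)].
Proof.
move=> hrr hst hap hrp.
have [s [hs hsz hq]] := real_poles_factor p q hrr hrp hst.
have [e he hp] := unit_allpass_on_circle p q hrr hst hap.
exists e, s; split=> // w.
have lc0 : (lead_coef q)%:C != 0 :> R[i].
  by rewrite fmorph_eq0 lead_coef_eq0; case: hrr.
have prod0 : \prod_(a <- s) (expj w - a%:C) != 0.
  by rewrite prodf_seq_neq0; apply/allP => a /(allP hs) /expj_subr_neq0 ->.
rewrite /rat_eval hp hq /allpass_arg expjD expj_sum_blaschke_arg //.
rewrite prodf_div big_split -conjc_prod big_const_seq count_predT iter_mulr_1.
by rewrite conjcM conjcC hsz /=; field; rewrite lc0 prod0.
Qed.

End AllpassStructure.

Section ContinuousArgument.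
Context {R : realType}.

Lemma cos_eq1_ltpi (x : R) : cos x = 1 -> `|x| < pi -> x = 0.
Proof.
move=> cx1 x_lt; apply/eqP; rewrite -normr_eq0; apply: contraT => x0.
have i0 : (0 : R) \in `[0, pi] by rewrite in_itv /= lexx pi_ge0.
have ix : `|x| \in `[0, pi] by rewrite in_itv /= normr_ge0 ltW.
by have := ltr_cos i0 ix; rewrite cos0 cos_norm cx1 ltxx lt_def x0 normr_ge0.
Qed.

(* Two continuous arguments of the same point of the circle differ by a
   multiple of [2 pi], hence by a constant near any point. *)
Lemma is_derive_continuous_arg {theta phi : R -> R} {w d : R} :
  {for w, continuous theta} -> is_derive w 1 phi d ->
  (forall x, expj (theta x) = expj (phi x)) -> is_derive w 1 theta d.
Proof.
move=> ctheta dphi same_expj.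
have cos_sin_diff x : cos (theta x - phi x) = 1 /\ sin (theta x - phi x) = 0.
  have /= hc := congr1 (@complex.Re R) (same_expj x).
  have /= hs := congr1 (@complex.Im R) (same_expj x).
  rewrite cosB sinB hc hs; split; last by rewrite mulrC subrr.
  by rewrite -!expr2 cos2Dsin2.
have cphi : {for w, continuous phi}.
  by apply: differentiable_continuous; apply/derivable1_diffP; case: dphi.
have cdiff : ((theta - phi) x @[x --> w] --> theta w - phi w)%classic.
  by apply: cvgB.
have near_w : \forall x \near w, `|(theta w - phi w) - (theta - phi) x| < pi.
  by move/cvgr_dist_lt: cdiff; apply; exact: pi_gt0.
have locally_shifted : \forall x \near w, phi x + (theta w - phi w) = theta x.
  apply: filterS near_w => x /= hx.
  have [cw sw] := cos_sin_diff w; have [cx sx] := cos_sin_diff x.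
  have /cos_eq1_ltpi /(_ hx) : cos ((theta w - phi w) - (theta x - phi x)) = 1.
    by rewrite cosB cw cx sw sx mulr1 mulr0 addr0.
  by move/eqP; rewrite subr_eq0 => /eqP ->; rewrite addrC subrK.
apply: near_eq_is_derive locally_shifted _.
by have := is_deriveD dphi (is_derive_cst (theta w - phi w) w 1); rewrite addr0.
Qed.

End ContinuousArgument.

Theorem lemma3 (R : realType) (n : nat) (p q : {poly R}) :
  real_rational p q -> rat_order p q = n -> stable p q ->
  unit_allpass p q -> real_poles p q ->
  forall theta : R -> R, cont_arg p q theta ->
  forall wp : R, - pi < wp < pi -> wp != 0 ->
    derivable theta wp 1 /\
    derive1 theta wp <= - `| sin (theta wp) / sin wp | /\
    ((n <= 1)%N -> derive1 theta wp = - `| sin (theta wp) / sin wp |).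
Proof.
move=> hrr hord hst hap hrp theta [ctheta htheta] wp wp_range wp0.
have [e [s [he hs hsz hf]]] := unit_allpass_arg p q hrr hst hap hrp.
have ns : n = size s.
  rewrite -hord /rat_order hsz; apply/maxn_idPr.
  by case: hst => hps _; rewrite -!subn1 leq_sub2r.
have same_expj w : expj (theta w) = expj (allpass_arg e s w) by rewrite -htheta hf.
have [dtheta dtheta_val] := is_derive_continuous_arg (ctheta wp)
  (is_derive_allpass_arg e s wp hs) same_expj.
have sin_theta : sin (theta wp) = sin (allpass_arg e s wp).
  by have /= := congr1 (@complex.Im R) (same_expj wp).
have sw0 := sin_neq0_Npipi wp wp_range wp0.
rewrite derive1E dtheta_val sin_theta ns; split=> //.
by split; [apply: allpass_arg_deriv_le | apply: allpass_arg_deriv_eq].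
Qed.
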